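(* For $\alpha\in\mathbb{C}$ and integers $m\geq1$, $r\geq1$, \[ \int_{[0,1]^r}\big[1-(1-\alpha)x_1\cdots x_r\big]^{m-1}dx_1\cdots dx_r=\sum_{m\geq m_1\geq\cdots\geq m_r\geq1}\frac{\alpha^{m_r-1}}{m\,m_1\cdots m_{r-1}}. \]
   Context: For $r=1$ the denominator on the right is just $m$. *)

From Stdlib Require Import Reals List.
From Coquelicot Require Import Coquelicot.
Import ListNotations.

(* Iterated integral over the unit cube [0,1]^r of F : list R -> C,
   F [x1; ...; xr] ; innermost integration variable is the last one. *)
Fixpoint cube_int (r : nat) (F : list R -> C) : C :=
  match r with
  | O => F nil
  | S r' => RInt (V := C_R_CompleteNormedModule)
              (fun x => cube_int r' (fun xs => F (x :: xs))) 0 1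
  end.

(* chains r b = all lists [m1; ...; mr] with b >= m1 >= ... >= mr >= 1 *)
Fixpoint chains (r b : nat) : list (list nat) :=
  match r with
  | O => [nil]
  | S r' => flat_map (fun k => map (cons k) (chains r' k)) (seq 1 b)
  end.

Definition chain_term (alpha : C) (m : nat) (l : list nat) : C :=
  (Cpow alpha (last l 1%nat - 1) /
   RtoC (INR m * fold_right Rmult 1 (map INR (removelast l))))%C.

Definition chain_sum (alpha : C) (m r : nat) : C :=
  fold_right Cplus (RtoC 0) (map (chain_term alpha m) (chains r m)).

(* Write b = 1 - alpha.  In one variable,
     int_0^1 (1 - c t)^(k-1) dt = (1/k) sum_(j=1..k) (1 - c)^(j-1),
   because integrating the derivative of t (1 - c t)^(n+1) gives
   (n+2) I_(n+1) - (n+1) I_n = (1 - c)^(n+1) for I_n = int_0^1 (1 - c t)^n dt.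
   So integrating out one variable turns a sequence of powers j |-> (1 - b y)^(j-1)
   into its Cesaro mean, and by linearity the same holds for Cesaro means of such
   sequences.  After the r integrations over [0,1]^r at y = 1, one is left with the
   r-fold iterated Cesaro mean of j |-> alpha^(j-1), whose expansion is the sum
   over chains m >= m_1 >= ... >= m_r >= 1. *)

From Stdlib Require Import Reals List Lia.
From Coquelicot Require Import Coquelicot.
Import ListNotations.

(* Complex derivatives live in C as a normed module over itself; integrals of
   C-valued functions of a real variable live in C as a real normed space. *)
Local Notation is_derive_C := (@is_derive C_AbsRing (AbsRing_NormedModule C_AbsRing)).
Local Notation ex_derive_C := (@ex_derive C_AbsRing (AbsRing_NormedModule C_AbsRing)).
Local Notation is_RInt_C := (@is_RInt C_R_CompleteNormedModule).

Local Open Scope C_scope.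

Lemma is_derive_C_eq (f : C -> C) (z l l' : C) :
  is_derive_C f z l -> l = l' -> is_derive_C f z l'.
Proof. now intros H <-. Qed.

Lemma is_derive_C_const (a z : C) : is_derive_C (fun _ => a) z (RtoC 0).
Proof. exact (is_derive_const (V:=AbsRing_NormedModule C_AbsRing) a z). Qed.

Lemma is_derive_C_Cmult (f g : C -> C) (z df dg : C) :
  is_derive_C f z df -> is_derive_C g z dg ->
  is_derive_C (fun z => f z * g z) z (df * g z + f z * dg).
Proof. intros Hf Hg; exact (is_derive_mult f g z df dg Hf Hg Cmult_comm). Qed.

Lemma ex_derive_C_const (a z : C) : ex_derive_C (fun _ => a) z.
Proof. exists (RtoC 0). apply is_derive_C_const. Qed.

Lemma ex_derive_C_Cmult (f g : C -> C) (z : C) :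
  ex_derive_C f z -> ex_derive_C g z -> ex_derive_C (fun z => f z * g z) z.
Proof. intros [df Hf] [dg Hg]. eexists. exact (is_derive_C_Cmult f g z df dg Hf Hg). Qed.

Lemma ex_derive_C_Cminus (f g : C -> C) (z : C) :
  ex_derive_C f z -> ex_derive_C g z -> ex_derive_C (fun z => f z - g z) z.
Proof.
  intros [df Hf] [dg Hg]. eexists.
  exact (is_derive_minus (V:=AbsRing_NormedModule C_AbsRing) f g z df dg Hf Hg).
Qed.

Lemma is_derive_C_affine (a c z : C) : is_derive_C (fun z => a - c * z) z (- c).
Proof.
  assert (H := is_derive_minus _ _ z _ _ (is_derive_C_const a z)
    (is_derive_C_Cmult (fun _ => c) (fun z => z) z _ _ (is_derive_C_const c z) (is_derive_id z))).
  apply (is_derive_C_eq _ _ _ _ H). unfold minus, plus, opp, one; simpl. ring.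
Qed.

Lemma is_derive_C_Cpow (f : C -> C) (z df : C) (n : nat) :
  is_derive_C f z df ->
  is_derive_C (fun z => Cpow (f z) (S n)) z (INR (S n) * Cpow (f z) n * df).
Proof.
  intros Hf. induction n as [|n IH].
  - apply (is_derive_ext (V:=AbsRing_NormedModule C_AbsRing) f); [intros; simpl; ring|].
    apply (is_derive_C_eq _ _ _ _ Hf). simpl; ring.
  - apply (is_derive_C_eq _ _ _ _ (is_derive_C_Cmult _ _ z _ _ Hf IH)).
    rewrite (S_INR (S n)), RtoC_plus, (Cpow_S (f z) n). ring.
Qed.

Lemma ex_derive_C_Cpow (f : C -> C) (z : C) (n : nat) :
  ex_derive_C f z -> ex_derive_C (fun z => Cpow (f z) n) z.
Proof.
  intros [df Hf]. destruct n as [|n].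
  - exists (RtoC 0). exact (is_derive_C_const 1 z).
  - eexists. exact (is_derive_C_Cpow f z df n Hf).
Qed.

Lemma ex_derive_C_Cpow_affine (c : C) (n : nat) (z : C) :
  ex_derive_C (fun z => Cpow (1 - c * z) n) z.
Proof. apply (ex_derive_C_Cpow (fun z => 1 - c * z)). exists (- c). apply is_derive_C_affine. Qed.

Lemma is_derive_C_mul_Cpow_affine (c : C) (n : nat) (z : C) :
  is_derive_C (fun z => z * Cpow (1 - c * z) (S n)) z
    (INR (S (S n)) * Cpow (1 - c * z) (S n) - INR (S n) * Cpow (1 - c * z) n).
Proof.
  apply (is_derive_C_eq _ _ _ _ (is_derive_C_Cmult (fun z => z) (fun z => Cpow (1 - c * z) (S n))
    z _ _ (is_derive_id z) (is_derive_C_Cpow (fun z => 1 - c * z) z _ n (is_derive_C_affine 1 c z)))).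
  rewrite (S_INR (S n)), RtoC_plus, (Cpow_S _ n). change (@one C_AbsRing) with (RtoC 1). ring.
Qed.

Lemma is_derive_C_restrict (f : C -> C) (x : R) (l : C) :
  is_derive_C f (RtoC x) l ->
  is_derive (K:=R_AbsRing) (V:=C_R_NormedModule) (fun t => f (RtoC t)) x l.
Proof.
  intros [_ Hf]. split; [apply is_linear_scal_l|].
  intros x0 Hx0.
  apply (is_filter_lim_locally_unique (K:=R_AbsRing) (V:=R_NormedModule)) in Hx0; subst x0.
  intros eps.
  destruct (Hf (RtoC x) (fun P HP => HP) eps) as [d Hd].
  exists d; intros t Ht.
  assert (Hb : ball (M:=AbsRing_UniformSpace C_AbsRing) (RtoC x) d (RtoC t)).
  { change (Cmod (RtoC t - RtoC x) < d). rewrite <- RtoC_minus, Cmod_R. exact Ht. }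
  specialize (Hd _ Hb).
  change (Cmod (f (RtoC t) - f (RtoC x) - (RtoC t - RtoC x) * l)
            <= eps * Cmod (RtoC t - RtoC x))%R in Hd.
  rewrite <- RtoC_minus, Cmod_R in Hd.
  rewrite <- Cmod_norm, scal_R_Cmult. exact Hd.
Qed.

Lemma is_RInt_C_eq (f : R -> C) (a b : R) (I J : C) :
  is_RInt_C f a b I -> I = J -> is_RInt_C f a b J.
Proof. now intros H <-. Qed.

Lemma is_RInt_C_ext (f g : R -> C) (a b : R) (I : C) :
  (forall t, f t = g t) -> is_RInt_C f a b I -> is_RInt_C g a b I.
Proof. intros Hfg. apply is_RInt_ext. intros t _. apply Hfg. Qed.

Lemma is_RInt_C_plus (f g : R -> C) (a b : R) (I J : C) :
  is_RInt_C f a b I -> is_RInt_C g a b J -> is_RInt_C (fun t => f t + g t) a b (I + J).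
Proof. exact (is_RInt_plus f g a b I J). Qed.

Lemma is_RInt_C_scal (x : R) (f : R -> C) (a b : R) (I : C) :
  is_RInt_C f a b I -> is_RInt_C (fun t => RtoC x * f t) a b (RtoC x * I).
Proof.
  intros H. rewrite <- scal_R_Cmult.
  apply (is_RInt_ext (fun t => scal x (f t))); [intros t _; apply scal_R_Cmult|].
  exact (is_RInt_scal f a b x I H).
Qed.

Lemma is_RInt_C_derive (F dF : C -> C) (a b : R) :
  (forall z, is_derive_C F z (dF z)) -> (forall z, ex_derive_C dF z) ->
  is_RInt_C (fun t => dF (RtoC t)) a b (F (RtoC b) - F (RtoC a)).
Proof.
  intros HF HdF. apply (is_RInt_derive (V:=C_R_CompleteNormedModule) (fun t => F (RtoC t))).
  - intros x _. apply is_derive_C_restrict, HF.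
  - intros x _. apply (ex_derive_continuous (K:=R_AbsRing) (V:=C_R_NormedModule)).
    destruct (HdF (RtoC x)) as [l Hl]. exists l. apply is_derive_C_restrict, Hl.
Qed.

Definition Csum (l : list C) : C := fold_right Cplus 0 l.

Lemma Csum_app (l1 l2 : list C) : Csum (l1 ++ l2) = Csum l1 + Csum l2.
Proof.
  induction l1 as [|a l1 IH]; simpl; [ring|].
  unfold Csum in *; simpl. rewrite IH. ring.
Qed.

Lemma Csum_flat_map {A B : Type} (g : B -> C) (h : A -> list B) (l : list A) :
  Csum (map g (flat_map h l)) = Csum (map (fun a => Csum (map g (h a))) l).
Proof.
  induction l as [|a l IH]; simpl; [reflexivity|].
  rewrite map_app, Csum_app, IH. reflexivity.
Qed.

Lemma Cmult_Csum_l {A : Type} (c : C) (g : A -> C) (l : list A) :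
  c * Csum (map g l) = Csum (map (fun a => c * g a) l).
Proof.
  induction l as [|a l IH]; simpl; [unfold Csum; simpl; ring|].
  unfold Csum in *; simpl. rewrite <- IH. ring.
Qed.

Lemma Csum_map_seq_S (u : nat -> C) (a n : nat) :
  Csum (map u (seq a (S n))) = Csum (map u (seq a n)) + u (a + n)%nat.
Proof. rewrite seq_S, map_app, Csum_app. simpl. ring. Qed.

(* Also at [x = 0], where both sides are the junk value [0]. *)
Lemma Cinv_RtoC (x : R) : / RtoC x = RtoC (/ x).
Proof.
  unfold Cinv, RtoC; simpl. f_equal.
  - destruct (Req_dec x 0) as [->|Hx].
    + rewrite Rinv_0. unfold Rdiv. ring.
    + field. exact Hx.
  - unfold Rdiv. ring.
Qed.

Lemma RtoC_Rinv_cancel (x : R) (z : C) : x <> 0%R -> RtoC (/ x) * (RtoC x * z) = z.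
Proof. intros Hx. rewrite Cmult_assoc, <- RtoC_mult, Rinv_l by exact Hx. ring. Qed.

Definition cesaro_mean (u : nat -> C) (k : nat) : C :=
  RtoC (/ INR k) * Csum (map u (seq 1 k)).

Lemma INR_mul_cesaro_mean (u : nat -> C) (k : nat) :
  RtoC (INR k) * cesaro_mean u k = Csum (map u (seq 1 k)).
Proof.
  unfold cesaro_mean. destruct k as [|k]; [simpl; ring|].
  rewrite Cmult_assoc, <- RtoC_mult, Rinv_r by (apply not_0_INR; lia). ring.
Qed.

Lemma cesaro_mean_ext (u v : nat -> C) (k : nat) :
  (forall j, u j = v j) -> cesaro_mean u k = cesaro_mean v k.
Proof. intros Huv. unfold cesaro_mean. f_equal. f_equal. apply map_ext, Huv. Qed.

Lemma is_RInt_Cpow_affine_recurrence (c : C) (n : nat) :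
  is_RInt_C
    (fun t => INR (S (S n)) * Cpow (1 - c * RtoC t) (S n) - INR (S n) * Cpow (1 - c * RtoC t) n)
    0 1 (Cpow (1 - c) (S n)).
Proof.
  eapply is_RInt_C_eq.
  - apply (is_RInt_C_derive (fun z => z * Cpow (1 - c * z) (S n))
      (fun z => INR (S (S n)) * Cpow (1 - c * z) (S n) - INR (S n) * Cpow (1 - c * z) n)).
    + apply is_derive_C_mul_Cpow_affine.
    + intros z. apply ex_derive_C_Cminus;
        (apply ex_derive_C_Cmult; [apply ex_derive_C_const | apply ex_derive_C_Cpow_affine]).
  - rewrite Cmult_1_r. ring.
Qed.

Lemma is_RInt_Cpow_affine (c : C) (n : nat) :
  is_RInt_C (fun t => Cpow (1 - c * RtoC t) n) 0 1
    (cesaro_mean (fun j => Cpow (1 - c) (j - 1)) (S n)).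
Proof.
  induction n as [|n IH].
  - apply (is_RInt_C_eq _ _ _ _ _ (is_RInt_const (V:=C_R_NormedModule) 0 1 (RtoC 1))).
    rewrite scal_R_Cmult. unfold cesaro_mean. simpl. rewrite Rinv_1, Rminus_0_r. ring.
  - pose proof (is_RInt_C_scal (/ INR (S (S n))) _ _ _ _
      (is_RInt_C_plus _ _ _ _ _ _ (is_RInt_Cpow_affine_recurrence c n)
        (is_RInt_C_scal (INR (S n)) _ _ _ _ IH))) as H.
    eapply is_RInt_C_eq; [eapply is_RInt_C_ext; [|exact H] |].
    + intros t. cbv beta.
      transitivity (RtoC (/ INR (S (S n))) * (RtoC (INR (S (S n))) * Cpow (1 - c * RtoC t) (S n))).
      * ring.
      * apply RtoC_Rinv_cancel, not_0_INR; lia.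
    + rewrite INR_mul_cesaro_mean. unfold cesaro_mean. rewrite (Csum_map_seq_S _ 1 (S n)).
      replace (1 + S n - 1)%nat with (S n) by lia. ring.
Qed.

Lemma is_RInt_C_Csum {A : Type} (g : A -> R -> C) (v : A -> C) (l : list A) (a b : R) :
  (forall j, In j l -> is_RInt_C (g j) a b (v j)) ->
  is_RInt_C (fun t => Csum (map (fun j => g j t) l)) a b (Csum (map v l)).
Proof.
  induction l as [|j l IH]; intros Hl.
  - apply (is_RInt_C_eq _ _ _ _ _ (is_RInt_const (V:=C_R_NormedModule) a b (RtoC 0))).
    rewrite scal_R_Cmult. simpl. ring.
  - apply is_RInt_C_plus; [apply Hl; left; reflexivity|].
    apply IH. intros i Hi. apply Hl. right; exact Hi.
Qed.

Lemma is_RInt_C_cesaro_mean (g : nat -> R -> C) (v : nat -> C) (k : nat) (a b : R) :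
  (forall j, (1 <= j <= k)%nat -> is_RInt_C (g j) a b (v j)) ->
  is_RInt_C (fun t => cesaro_mean (fun j => g j t) k) a b (cesaro_mean v k).
Proof.
  intros Hg. apply is_RInt_C_scal, is_RInt_C_Csum.
  intros j Hj. apply in_seq in Hj. apply Hg. lia.
Qed.

(* [cesaro_pow b r k y] is the closed form of int_[0,1]^r (1 - b y x_1 ... x_r)^(k-1) dx. *)
Fixpoint cesaro_pow (b : C) (r k : nat) (y : R) : C :=
  match r with
  | O => Cpow (1 - b * RtoC y) (k - 1)
  | S r' => cesaro_mean (fun j => cesaro_pow b r' j y) k
  end.

Lemma is_RInt_cesaro_pow (b : C) (r k : nat) (y : R) : (1 <= k)%nat ->
  is_RInt_C (fun x => cesaro_pow b r k (y * x)) 0 1 (cesaro_pow b (S r) k y).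
Proof.
  revert k. induction r as [|r IH]; intros k Hk.
  - destruct k as [|n]; [lia|].
    apply (is_RInt_C_ext (fun t => Cpow (1 - b * RtoC y * RtoC t) n)).
    + intros t. simpl cesaro_pow. rewrite Nat.sub_0_r, RtoC_mult, Cmult_assoc. reflexivity.
    + exact (is_RInt_Cpow_affine (b * RtoC y) n).
  - apply is_RInt_C_cesaro_mean. intros j Hj. apply IH. lia.
Qed.

Lemma cube_int_ext (r : nat) (F G : list R -> C) :
  (forall xs, F xs = G xs) -> cube_int r F = cube_int r G.
Proof.
  revert F G. induction r as [|r IH]; intros F G HFG; simpl.
  - apply HFG.
  - apply (RInt_ext (V:=C_R_CompleteNormedModule)). intros x _. apply IH. intros xs. apply HFG.
Qed.

Lemma cube_int_cesaro_pow (b : C) (r k : nat) (y : R) : (1 <= k)%nat ->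
  cube_int r (fun xs => cesaro_pow b 0 k (y * fold_right Rmult 1 xs)) = cesaro_pow b r k y.
Proof.
  intros Hk. revert y. induction r as [|r IH]; intros y.
  - simpl. rewrite Rmult_1_r. reflexivity.
  - simpl cube_int.
    rewrite (RInt_ext (V:=C_R_CompleteNormedModule) _ (fun x => cesaro_pow b r k (y * x))).
    + apply (is_RInt_unique (V:=C_R_CompleteNormedModule)), is_RInt_cesaro_pow, Hk.
    + intros x _. rewrite <- IH. apply cube_int_ext. intros xs. simpl. rewrite Rmult_assoc. reflexivity.
Qed.

Lemma chain_term_single (alpha : C) (m j : nat) :
  chain_term alpha m [j] = RtoC (/ INR m) * Cpow alpha (j - 1).
Proof. unfold chain_term, Cdiv. simpl. rewrite Rmult_1_r, Cinv_RtoC. ring. Qed.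

Lemma chain_term_cons (alpha : C) (m j : nat) (c : list nat) : c <> [] ->
  chain_term alpha m (j :: c) = RtoC (/ INR m) * chain_term alpha j c.
Proof.
  destruct c as [|i c]; [congruence|]. intros _.
  unfold chain_term, Cdiv. simpl. rewrite !Cinv_RtoC, !Rinv_mult, !RtoC_mult. ring.
Qed.

Lemma chains_S_not_nil (r b : nat) (c : list nat) : In c (chains (S r) b) -> c <> [].
Proof.
  simpl. intros Hc. apply in_flat_map in Hc as [j [_ Hj]].
  apply in_map_iff in Hj as [c' [<- _]]. discriminate.
Qed.

Lemma chain_sum_S (alpha : C) (m r : nat) :
  chain_sum alpha m (S r) =
  Csum (map (fun j => Csum (map (fun c => chain_term alpha m (j :: c)) (chains r j))) (seq 1 m)).
Proof.
  unfold chain_sum. change (fold_right Cplus 0) with Csum. simpl chains.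
  rewrite Csum_flat_map. f_equal. apply map_ext. intros j. rewrite map_map. reflexivity.
Qed.

Lemma chain_sum_1 (alpha : C) (m : nat) :
  chain_sum alpha m 1 = cesaro_mean (fun j => Cpow alpha (j - 1)) m.
Proof.
  rewrite chain_sum_S. unfold cesaro_mean. rewrite Cmult_Csum_l. f_equal.
  apply map_ext. intros j. simpl. rewrite chain_term_single. unfold Csum; simpl. ring.
Qed.

Lemma chain_sum_SS (alpha : C) (m r : nat) :
  chain_sum alpha m (S (S r)) = cesaro_mean (fun j => chain_sum alpha j (S r)) m.
Proof.
  rewrite chain_sum_S. unfold cesaro_mean. rewrite Cmult_Csum_l. f_equal.
  apply map_ext. intros j. unfold chain_sum. change (fold_right Cplus 0) with Csum.
  rewrite Cmult_Csum_l. f_equal. apply map_ext_in. intros c Hc.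
  apply chain_term_cons, (chains_S_not_nil r j), Hc.
Qed.

Lemma cesaro_pow_chain_sum (alpha : C) (r m : nat) :
  cesaro_pow (1 - alpha) (S r) m 1 = chain_sum alpha m (S r).
Proof.
  revert m. induction r as [|r IH]; intros m.
  - rewrite chain_sum_1. apply cesaro_mean_ext. intros j. simpl. f_equal. ring.
  - rewrite chain_sum_SS. apply cesaro_mean_ext. exact IH.
Qed.

Local Close Scope C_scope.

Theorem lemma2p1 (alpha : C) (m r : nat) (hm : (1 <= m)%nat) (hr : (1 <= r)%nat) :
  cube_int r (fun xs => Cpow (RtoC 1 - (RtoC 1 - alpha) * RtoC (fold_right Rmult 1 xs))%C (m - 1))
  = chain_sum alpha m r.
Proof.
  destruct r as [|r]; [lia|].
  rewrite <- cesaro_pow_chain_sum, <- (cube_int_cesaro_pow _ (S r) m 1 hm).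
  apply cube_int_ext. intros xs. cbn [cesaro_pow]. rewrite Rmult_1_l. reflexivity.
Qed.
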